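(* Let $f(X)=X^4+2$. Assume that $|S^2(f,T)|=o(T)$ as $T\to\infty$. Then the set of $d\in\mathbb{N}$ such that $f(d)$ is square-free has a natural density, this density is positive, and it equals $\prod_p\left(1-\frac{\delta_f(p^2)}{p^2}\right)$, where $\delta_f(N)=|\{a\bmod N: f(a)\equiv 0\pmod N\}|$.
   Context: For a natural number $n$, $R_f(n):=\min\{|d|: d\in\mathbb{Z},\ n\mid f(d)\}$ if such $d$ exists, and $R_f(n)=\infty$ otherwise. For real $T$, $S^2(f,T):=\{p \text{ prime}: R_f(p^2)\le T\}$. *)

From HB Require Import structures.
From mathcomp Require Import all_boot all_order all_algebra.
From mathcomp Require Import all_classical all_reals all_analysis.
Set Implicit Arguments. Unset Strict Implicit. Unset Printing Implicit Defensive.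
Import Order.TTheory GRing.Theory Num.Theory.
Local Open Scope ring_scope.

Definition f (d : int) : int := d ^+ 4 + 2.

Definition Rf_at (n m : nat) : bool :=
  ((n%:Z %| f m%:Z)%Z || (n%:Z %| f (- m%:Z))%Z).

(* R_f(n) = min{|d| : n | f(d)}, with None standing for +infinity *)
Definition Rf (n : nat) : option nat :=
  match pselect (exists m, Rf_at n m) with
  | left h => Some (ex_minn h)
  | right _ => None
  end.

Definition inS2 {R : realType} (T : R) (p : nat) : bool :=
  prime p && (if Rf (p ^ 2)%N is Some r then (r%:R <= T) else false).

(* |S^2(f,T)|.  Every p in S^2(f,T) satisfies p^2 <= m^4+2 for some integer
   m <= T, hence p < truncn(T)^4 + 3; so counting below that bound counts
   the whole (finite) set. *)
Definition S2card {R : realType} (T : R) : nat :=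
  #|[set p : 'I_((Num.truncn T) ^ 4 + 3)%N | inS2 T p]|.

Definition squarefree (n : nat) : bool :=
  (0 < n)%N && [forall k : 'I_n.+1, (1 < k)%N ==> ~~ ((k ^ 2 %| n)%N)].

Definition sqfree_count (N : nat) : nat :=
  count (fun d => squarefree (d ^ 4 + 2)%N) (iota 1 N).

Definition delta (N : nat) : nat :=
  #|[set a : 'I_N | (N %| (a ^ 4 + 2))%N]|.

From HB Require Import structures.
From mathcomp Require Import all_boot all_order all_algebra.
From mathcomp Require Import all_classical all_reals all_analysis.
From mathcomp Require Import zify ring lra.
Import Order.TTheory GRing.Theory Num.Theory.
Import numFieldNormedType.Exports.
Local Open Scope classical_set_scope.
Local Open Scope ring_scope.

(* Write P_z for the partial Euler product over the primes p < z.  The condition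
   "p^2 does not divide f(d) for every prime p < z" is periodic modulo
   M_z = prod_(p < z) p^2 and, by the Chinese remainder theorem, holds for exactly
   prod_(p < z) (p^2 - delta(p^2)) residues, so it has density P_z.  Among d <= N,
   the d it keeps although f(d) is not square-free are counted by the primes
   p >= z with p^2 | f(d).  Roots of f mod p are simple for p odd, so
   delta(p^2) <= 4 (and delta(4) = 0); hence primes with p^2 <= N remove O(N/z)
   values of d, and each larger prime removes at most 4 of them and lies in
   S^2(f,N), which is o(N) by hypothesis.  Letting N and then z tend to infinity
   gives the density lim P_z, and lim P_z >= prod_(k >= 3) (1 - 4/k^2) = 1/6. *)

Definition f_nat (x : nat) : nat := (x ^ 4 + 2)%N.

Lemma eq_mod_small {q a b : nat} : (a < q)%N -> (b < q)%N ->
  a = b %[mod q] -> a = b.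
Proof. by move=> aq bq; rewrite !modn_small. Qed.

Lemma natr_Fp_eq0 p n : prime p -> ((n%:R : 'F_p) == 0) = (p %| n)%N.
Proof. by move=> p_pr; rewrite -val_eqE /= val_Fp_nat. Qed.

Lemma card_roots_Fp_le4 p : (#|[set x : 'F_p | (x ^+ 4 + 2%:R == 0)%R]%SET| <= 4)%N.
Proof.
set P : {poly 'F_p} := 'X^4 + (2%:R)%:P.
have P_neq0 : P != 0 by rewrite -size_poly_eq0 size_XnaddC.
rewrite cardE -ltnS -(size_XnaddC (2%:R : 'F_p) (isT : (0 < 4)%N)).
apply: max_poly_roots P_neq0 _ (enum_uniq _).
by apply/allP => x; rewrite mem_enum inE /root /P hornerD hornerXn hornerC.
Qed.

Lemma f_natB a b : (b <= a)%N ->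
  (f_nat a - f_nat b = (a - b) * (a ^ 3 + a ^ 2 * b + a * b ^ 2 + b ^ 3))%N.
Proof.
move=> /subnK <-; set k := (a - b)%N; rewrite /f_nat subnDr addnK.
suff -> : ((k + b) ^ 4 = k * ((k + b) ^ 3 + (k + b) ^ 2 * b + (k + b) * b ^ 2 + b ^ 3) + b ^ 4)%N
  by rewrite addnK.
ring.
Qed.

(* Hensel: the derivative 4a^3 of f does not vanish mod p at a root a, since p does not divide 2. *)
Lemma eq_roots_mod_prime_sq {p a b : nat} : prime p -> p != 2%N ->
  (p ^ 2 %| f_nat a)%N -> (p ^ 2 %| f_nat b)%N -> a = b %[mod p] ->
  (a < p ^ 2)%N -> (b < p ^ 2)%N -> a = b.
Proof.
move=> p_pr p_neq2; wlog ba : a b / (b <= a)%N => [wlog_ba|].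
  by move=> *; case: (leqP b a) => [|/ltnW] ?; [|symmetry]; apply: wlog_ba.
move=> fa fb ab ap bp; apply: (eq_mod_small ap bp); apply/eqP.
rewrite eqn_mod_dvd //.
set s := (a ^ 3 + a ^ 2 * b + a * b ^ 2 + b ^ 3)%N.
have two_neq0 : (2%:R : 'F_p) != 0 by rewrite natr_Fp_eq0 // dvdn_prime2.
have a_neq0 : (a%:R : 'F_p) != 0.
  apply: contraNneq two_neq0 => a0.
  have : (p %| f_nat a)%N by apply: dvdn_trans fa; rewrite dvdn_exp.
  by rewrite -natr_Fp_eq0 // natrD natrX a0 expr0n add0r.
have ps : coprime p s.
  rewrite prime_coprime // -natr_Fp_eq0 // /s !natrD !natrM.
  have -> : (b%:R : 'F_p) = a%:R by rewrite -Fp_nat_mod // -ab Fp_nat_mod.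
  rewrite (_ : _ + _ = 2%:R * 2%:R * a%:R ^+ 3); last by ring.
  by rewrite !mulf_neq0 // expf_neq0.
by rewrite -(Gauss_dvdl _ (coprimeXl 2 ps)) -f_natB // dvdn_sub.
Qed.

Lemma delta4 : delta 4 = 0%N.
Proof.
apply/eqP; rewrite cards_eq0; apply/eqP/setP => x; rewrite !inE.
by case: x => [[|[|[|[|]]]]].
Qed.

Lemma delta_le n : (delta n <= n)%N.
Proof. by rewrite /delta -[X in (_ <= X)%N]card_ord max_card. Qed.

Lemma delta_prime_sq_le4 p : prime p -> (delta (p ^ 2) <= 4)%N.
Proof.
move=> p_pr; have [-> | p_neq2] := eqVneq p 2%N; first by rewrite delta4.
set S := [set a : 'I_(p ^ 2) | (p ^ 2 %| a ^ 4 + 2)%N]%SET.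
pose red (a : 'I_(p ^ 2)) : 'F_p := (a : nat)%:R.
have red_inj : {in S &, injective red}.
  move=> a b; rewrite !inE => fa fb ab; apply: val_inj.
  apply: (eq_roots_mod_prime_sq p_pr p_neq2 fa fb _ (ltn_ord a) (ltn_ord b)).
  by move/(congr1 val): ab; rewrite /= !val_Fp_nat.
have card_red : #|red @: S| = #|S| := card_in_imset red_inj.
rewrite -[delta _]/#|S| -card_red.
apply: (leq_trans _ (card_roots_Fp_le4 p)); apply: subset_leq_card.
apply/fintype.subsetP => x /imsetP [a]; rewrite !inE => fa ->.
by rewrite /red -natrX -natrD natr_Fp_eq0 // (dvdn_trans _ fa) // dvdn_exp.
Qed.

Section Sieve.
Local Open Scope nat_scope.

Lemma f_nat_mod q x : f_nat x = f_nat (x %% q) %[mod q].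
Proof. by rewrite /f_nat -modnDml -modnXm modnDml. Qed.

Lemma dvdn_f_nat_addr q M x : q %| M -> (q %| f_nat (x + M)) = (q %| f_nat x).
Proof. by move=> /eqP qM; rewrite /dvdn f_nat_mod -modnDmr qM addn0 -f_nat_mod. Qed.

Lemma sum_nat_negb (P : pred nat) m n :
  \sum_(m <= i < n) ~~ P i = (n - m) - \sum_(m <= i < n) P i.
Proof.
have -> : n - m = \sum_(m <= i < n) (P i + ~~ P i).
  by rewrite -[n - m]muln1 -sum_nat_const_nat; apply: eq_bigr => i _; case: (P i).
by rewrite big_split addKn.
Qed.

Lemma sum_nat_blocks (h : nat -> nat) M q :
  \sum_(0 <= d < M * q) h d = \sum_(0 <= t < q) \sum_(0 <= a < M) h (a + M * t).
Proof.
elim: q => [|q IHq]; first by rewrite muln0 !big_geq.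
rewrite big_nat_recr //= -IHq mulnS addnC (big_cat_nat (leq0n _) (leq_addr M _)) /=.
by congr (_ + _); rewrite -{1}[M * q]add0n big_addn addKn.
Qed.

Lemma sum_nat_period (h : nat -> nat) M s : (forall x, h (x + M) = h x) ->
  \sum_(s <= d < s + M) h d = \sum_(0 <= d < M) h d.
Proof.
move=> hM; elim: s => [|s IHs]; first by rewrite add0n.
case: M hM IHs => [|M] hM IHs; first by rewrite addn0 !big_geq.
rewrite -IHs addSn addnS big_nat_recr ?leq_addr // (big_ltn (m := s)) ?ltnS ?leq_addr //.
have -> : h (s + M).+1 = h s by rewrite -addnS hM.
exact: addnC.
Qed.

Lemma sum_nat_periodic (h : nat -> nat) M s k : (forall x, h (x + M) = h x) ->
  \sum_(s <= d < s + M * k) h d = k * \sum_(0 <= d < M) h d.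
Proof.
move=> hM; elim: k => [|k IHk]; first by rewrite muln0 addn0 big_geq.
rewrite mulnS [M + _]addnC addnA (big_cat_nat (leq_addr _ s) (leq_addr M _)) /=.
by rewrite IHk sum_nat_period // mulSn addnC.
Qed.

Lemma sum_nat_periodic_bounds (h : nat -> nat) M N : 0 < M ->
  (forall x, h (x + M) = h x) ->
  N %/ M * \sum_(0 <= d < M) h d <= \sum_(1 <= d < N.+1) h d <=
  (N %/ M).+1 * \sum_(0 <= d < M) h d.
Proof.
move=> M0 hM; rewrite -!(sum_nat_periodic h M 1 _ hM).
have sum_mono b c : 1 <= b <= c -> \sum_(1 <= d < b) h d <= \sum_(1 <= d < c) h d.
  by case/andP => b1 bc; rewrite [X in _ <= X](big_cat_nat b1 bc) leq_addr.
apply/andP; split; apply: sum_mono; rewrite add1n ltnS /= mulnC; first exact: leq_divM.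
exact/ltnW/ltn_ceil.
Qed.

Lemma eq_mod_progression q M a t1 t2 : coprime q M -> t1 < q -> t2 < q ->
  a + M * t1 = a + M * t2 %[mod q] -> t1 = t2.
Proof.
move=> qM t1q t2q /eqP; rewrite eqn_modDl => eqM; apply: (eq_mod_small t1q t2q).
have cancel u v : v <= u -> M * u == M * v %[mod q] -> u = v %[mod q].
  move=> vu; rewrite !eqn_mod_dvd ?leq_mul2l ?vu ?orbT // -mulnBr Gauss_dvdr //.
  by rewrite -eqn_mod_dvd // => /eqP.
by case: (leqP t2 t1) => [|/ltnW] t12; [|symmetry]; apply: cancel; rewrite // eq_sym.
Qed.

Lemma count_roots_progression q M a : 0 < q -> coprime q M ->
  \sum_(0 <= t < q) (q %| f_nat (a + M * t)) = delta q.
Proof.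
move=> q0 qM; rewrite big_mkord.
pose red (t : 'I_q) := Ordinal (ltn_pmod (a + M * t) q0).
have red_inj : injective red.
  move=> t1 t2 /(congr1 val) /= eq12; apply: val_inj.
  exact: eq_mod_progression qM (ltn_ord t1) (ltn_ord t2) eq12.
rewrite (eq_bigr (fun t => nat_of_bool (q %| f_nat (red t)))); last first.
  by move=> t _; rewrite /dvdn f_nat_mod.
rewrite -(reindex_inj (P := xpredT) (F := fun r : 'I_q => nat_of_bool (q %| f_nat r)) red_inj).
by rewrite /delta -sum1_card [RHS]big_mkcond; apply: eq_bigr => i _; rewrite inE.
Qed.

Definition sqfree_below z d := all (fun p => prime p ==> ~~ (p ^ 2 %| f_nat d)) (iota 0 z).
Definition sq_primorial z := \prod_(0 <= p < z | prime p) p ^ 2.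
Definition sqfree_residues z := \prod_(0 <= p < z | prime p) (p ^ 2 - delta (p ^ 2)).

Lemma sqfree_belowS z d :
  sqfree_below z.+1 d = sqfree_below z d && (prime z ==> ~~ (z ^ 2 %| f_nat d)).
Proof. by rewrite /sqfree_below -[z.+1]addn1 iotaD all_cat /= andbT. Qed.

Lemma sq_primorialS z : sq_primorial z.+1 = sq_primorial z * (if prime z then z ^ 2 else 1).
Proof. by rewrite /sq_primorial big_mkcond big_nat_recr //= -big_mkcond. Qed.

Lemma sqfree_residuesS z :
  sqfree_residues z.+1 = sqfree_residues z * (if prime z then z ^ 2 - delta (z ^ 2) else 1).
Proof. by rewrite /sqfree_residues big_mkcond big_nat_recr //= -big_mkcond. Qed.

Lemma sq_primorial_gt0 z : 0 < sq_primorial z.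
Proof. by apply: prodn_cond_gt0 => p /prime_gt0 p0; rewrite expn_gt0 p0. Qed.

Lemma dvdn_sq_primorial p z : prime p -> p < z -> p ^ 2 %| sq_primorial z.
Proof.
move=> p_pr pz; rewrite /sq_primorial big_mkcond (bigD1_seq p) ?iota_uniq //=.
  by rewrite p_pr dvdn_mulr.
by rewrite mem_index_iota.
Qed.

Lemma coprime_sq_primorial z : prime z -> coprime (z ^ 2) (sq_primorial z).
Proof.
move=> z_pr; rewrite coprimeXl // prime_coprime // Euclid_dvd_prod // big_has_cond.
apply/hasPn => p; rewrite mem_index_iota => /andP [_ pz] /=.
apply/negP => /andP [p_pr]; rewrite Euclid_dvdX // dvdn_prime2 // andbT => /eqP zp.
by rewrite zp ltnn in pz.
Qed.

Lemma sqfree_below_addr z x k : sqfree_below z (x + sq_primorial z * k) = sqfree_below z x.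
Proof.
apply: eq_in_all => p; rewrite mem_iota add0n => /andP [_ pz].
by case p_pr: (prime p) => //=; rewrite dvdn_f_nat_addr // dvdn_mulr // dvdn_sq_primorial.
Qed.

(* Chinese remainder theorem: the residues mod sq_primorial z.+1 are the pairs of
   residues mod sq_primorial z and mod z^2. *)
Lemma sum_sqfree_below_period z :
  \sum_(0 <= d < sq_primorial z) sqfree_below z d = sqfree_residues z.
Proof.
elim: z => [|z IHz].
  by rewrite [sq_primorial 0]big_geq // [sqfree_residues 0]big_geq // big_nat1.
rewrite sq_primorialS sqfree_residuesS; case: ifP => z_pr; last first.
  by rewrite !muln1 -IHz; apply: eq_bigr => d _; rewrite sqfree_belowS z_pr andbT.
rewrite sum_nat_blocks (eq_bigr (fun t => \sum_(0 <= a < sq_primorial z)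
    sqfree_below z a * ~~ (z ^ 2 %| f_nat (a + sq_primorial z * t)))); last first.
  by move=> t _; apply: eq_bigr => a _; rewrite sqfree_belowS sqfree_below_addr z_pr mulnb.
rewrite exchange_big /= -IHz big_distrl /=; apply: eq_bigr => a _.
rewrite -big_distrr /= sum_nat_negb subn0 count_roots_progression //.
  by rewrite expn_gt0 prime_gt0.
exact: coprime_sq_primorial.
Qed.

End Sieve.

Section Counting.
Local Open Scope nat_scope.

Lemma f_nat_gt0 d : 0 < f_nat d.
Proof. by rewrite addn_gt0 orbT. Qed.

Lemma squarefreePn {n} : 0 < n ->
  reflect (exists2 p, prime p & p ^ 2 %| n) (~~ squarefree n).
Proof.
move=> n0; rewrite /squarefree n0 /= negb_forall.
apply: (iffP existsP) => [[k] | [p p_pr pn]].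
  rewrite negb_imply negbK => /andP [k1 kn]; exists (pdiv k); first exact: pdiv_prime.
  by apply: dvdn_trans kn; rewrite dvdn_exp2r // pdiv_dvd.
have p_lt : p < n.+1.
  by rewrite ltnS (leq_trans _ (dvdn_leq n0 pn)) // -{1}[p]expn1 leq_pexp2l // prime_gt0.
by exists (Ordinal p_lt); rewrite negb_imply negbK /= prime_gt1.
Qed.

Lemma sqfree_countE N : sqfree_count N = \sum_(1 <= d < N.+1) squarefree (f_nat d).
Proof. by rewrite /sqfree_count -sum1_count big_mkcond /index_iota subSS subn0. Qed.

Definition sqfree_below_count z N := \sum_(1 <= d < N.+1) sqfree_below z d.
Definition sqdiv_count N p := \sum_(1 <= d < N.+1) (p ^ 2 %| f_nat d).

Lemma sqfree_below_count_bounds z N :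
  N %/ sq_primorial z * sqfree_residues z <= sqfree_below_count z N <=
  (N %/ sq_primorial z).+1 * sqfree_residues z.
Proof.
rewrite -sum_sqfree_below_period; apply: sum_nat_periodic_bounds (sq_primorial_gt0 z) _ => x.
by rewrite -{1}[sq_primorial z]muln1 sqfree_below_addr.
Qed.

Lemma sqfree_count_le_below z N : sqfree_count N <= sqfree_below_count z N.
Proof.
rewrite sqfree_countE; apply: leq_sum => d _.
case: (boolP (squarefree _)) => //= sqf; rewrite lt0b.
apply/allP => p _; apply/implyP => p_pr; apply: contraL sqf => pd.
by apply/(squarefreePn (f_nat_gt0 d)); exists p.
Qed.

(* A prime p with p^2 | f(d) and d <= N satisfies p <= p^2 <= N^4 + 2. *)
Lemma sqfree_below_count_le z N : sqfree_below_count z N <=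
  sqfree_count N + \sum_(z <= p < N ^ 4 + 3 | prime p) sqdiv_count N p.
Proof.
rewrite /sqfree_below_count sqfree_countE /sqdiv_count exchange_big /= -big_split /=.
rewrite big_seq [X in _ <= X]big_seq; apply: leq_sum => d.
rewrite mem_index_iota => /andP [_ dN].
have [/(squarefreePn (f_nat_gt0 d)) [p p_pr pd] | /negPn ->] :=
  boolP (~~ squarefree (f_nat d)); last exact: leq_trans (leq_b1 _) (leq_addr _ _).
case: (boolP (sqfree_below z d)) => //= below.
have zp : z <= p.
  rewrite leqNgt; apply/negP => pz; move/allP/(_ p): below.
  by rewrite mem_iota add0n pz p_pr pd => /(_ isT).
have pN : p < N ^ 4 + 3.
  have p_le : p <= p ^ 2 by rewrite -{1}[p]expn1 leq_pexp2l // prime_gt0.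
  apply: leq_ltn_trans (leq_trans p_le (dvdn_leq (f_nat_gt0 d) pd)) _.
  by rewrite /f_nat [_ + 3]addnS ltnS leq_add2r leq_exp2r // -ltnS.
rewrite big_mkcond (bigD1_seq p) ?mem_index_iota ?zp ?iota_uniq //=.
by rewrite p_pr pd /= addnCA add1n.
Qed.

Lemma sqdiv_count_le N p : prime p -> sqdiv_count N p <= (N %/ p ^ 2).+1 * 4.
Proof.
move=> p_pr; have p2_gt0 : 0 < p ^ 2 by rewrite expn_gt0 prime_gt0.
have f_per x : nat_of_bool (p ^ 2 %| f_nat (x + p ^ 2)) = (p ^ 2 %| f_nat x).
  by rewrite dvdn_f_nat_addr.
case/andP: (sum_nat_periodic_bounds _ _ N p2_gt0 f_per) => _ /leq_trans; apply.
have -> : \sum_(0 <= d < p ^ 2) (p ^ 2 %| f_nat d) = delta (p ^ 2).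
  rewrite -(count_roots_progression _ _ 0 p2_gt0 (coprimen1 _)).
  by apply: eq_bigr => d _; rewrite add0n mul1n.
by rewrite leq_mul2l delta_prime_sq_le4 ?orbT.
Qed.

Lemma sqdiv_count_gt0 N p : 0 < sqdiv_count N p -> exists2 d, d <= N & p ^ 2 %| f_nat d.
Proof.
rewrite lt0n sum_nat_seq_eq0 -has_predC => /hasP [d].
by rewrite mem_index_iota => /andP [_ dN] /=; rewrite eqb0 negbK; exists d.
Qed.

End Counting.

Section EulerProduct.
Variable R : realType.

Definition euler_factor p : R := 1 - (delta (p ^ 2))%:R / (p ^ 2)%:R.
Definition euler_prod z : R := \prod_(0 <= p < z | prime p) euler_factor p.

Lemma euler_prodS z :
  euler_prod z.+1 = euler_prod z * (if prime z then euler_factor z else 1).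
Proof. by rewrite /euler_prod big_mkcond big_nat_recr //= -big_mkcond. Qed.

Lemma residues_over_primorial z :
  (sqfree_residues z)%:R / (sq_primorial z)%:R = euler_prod z.
Proof.
rewrite /sqfree_residues /sq_primorial !natr_prod -prodf_div; apply: eq_bigr => p p_pr.
by rewrite natrB ?delta_le // mulrBl divff // pnatr_eq0 -lt0n expn_gt0 (prime_gt0 p_pr).
Qed.

Lemma euler_factor_le1 p : euler_factor p <= 1.
Proof. by rewrite lerBlDr lerDl divr_ge0 ?ler0n. Qed.

Lemma euler_factor_ge p : prime p -> 1 - 4 / (p ^ 2)%:R <= euler_factor p.
Proof.
move=> p_pr; rewrite lerB // ler_pM2r ?invr_gt0 ?ltr0n ?expn_gt0 ?prime_gt0 //.
by rewrite ler_nat delta_prime_sq_le4.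
Qed.

Lemma euler_factor_ge0 p : prime p -> 0 <= euler_factor p.
Proof.
move=> p_pr; rewrite subr_ge0 ler_pdivrMr ?ltr0n ?expn_gt0 ?prime_gt0 //.
by rewrite mul1r ler_nat delta_le.
Qed.

Lemma euler_prod_ge0 z : 0 <= euler_prod z.
Proof. exact: prodr_ge0 euler_factor_ge0. Qed.

Lemma euler_prod_nonincreasing : nonincreasing_seq euler_prod.
Proof.
apply/nonincreasing_seqP => z; rewrite euler_prodS.
by case: ifP => _; rewrite ?mulr1 // ler_piMr ?euler_prod_ge0 ?euler_factor_le1.
Qed.

Lemma euler_prod3 : euler_prod 3 = 1.
Proof.
by rewrite !euler_prodS /= /euler_prod big_geq // /euler_factor delta4 mul0r subr0 !mulr1.
Qed.

(* Since 1 - 4/(k+3)^2 = (k+1)(k+5)/(k+3)^2, the product of these factors telescopes. *)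
Lemma euler_prod_ge_telescope k :
  (k%:R + 3) * (k%:R + 4) / (6 * (k%:R + 1) * (k%:R + 2)) <= euler_prod k.+3.
Proof.
elim: k => [|k IHk]; first by rewrite euler_prod3 mulr0n ler_pdivrMr; lra.
have x0 : 0 <= k%:R :> R by rewrite ler0n.
rewrite euler_prodS -natr1.
have factor_ge : 1 - 4 / (k.+3 ^ 2)%:R <= (if prime k.+3 then euler_factor k.+3 else 1).
  by case: ifP => [/euler_factor_ge // | _]; rewrite lerBlDr lerDl divr_ge0 ?ler0n.
rewrite natrX -addn3 natrD in factor_ge.
apply: le_trans (ler_pM _ _ IHk factor_ge); last first.
- rewrite subr_ge0 ler_pdivrMr; nra.
- by rewrite divr_ge0 // ?mulr_ge0 //; lra.
rewrite le_eqVlt predU1l //; field.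
by rewrite !paddr_eq0 ?ler0n // ?pnatr_eq0; lra.
Qed.

Lemma euler_prod_ge z : 1 / 6 <= euler_prod z.
Proof.
have [z3 | z_lt3] := leqP 3 z; last first.
  by rewrite (le_trans _ (euler_prod_nonincreasing _ _ (ltnW z_lt3))) // euler_prod3; lra.
rewrite -(subnK z3) addn3; apply: le_trans (euler_prod_ge_telescope _).
have x0 : 0 <= (z - 3)%:R :> R by rewrite ler0n.
rewrite ler_pdivlMr; nra.
Qed.

Lemma sum_inv_sq_le z n : (0 < z)%N ->
  \sum_(z <= k < n) 1 / (k ^ 2)%:R <= 2 / z%:R :> R.
Proof.
move=> z0; have [nz | zn] := leqP n z.
  by rewrite big_geq // divr_ge0 ?ler0n.
pose u k : R := - (2 / k%:R).
have term_le k : (0 < k)%N -> 1 / (k ^ 2)%:R <= u k.+1 - u k.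
  move=> k0; have x0 : 0 < k%:R :> R by rewrite ltr0n.
  rewrite /u opprK addrC -(natr1 k) natrX -subr_ge0.
  have -> : 2 / k%:R - 2 / (k%:R + 1) - 1 / k%:R ^+ 2 =
      (k%:R - 1) / (k%:R ^+ 2 * (k%:R + 1)) :> R.
    by field; rewrite paddr_eq0 ?ler0n // oner_eq0 andbF gt_eqF.
  have x1 : 0 <= k%:R - 1 :> R by rewrite subr_ge0 ler1n.
  exact: divr_ge0.
apply: le_trans (_ : \sum_(z <= k < n) (u k.+1 - u k) <= _).
  rewrite !big_seq; apply: ler_sum => k; rewrite mem_index_iota => /andP [zk _].
  exact/term_le/(leq_trans z0 zk).
by rewrite telescope_sumr ?(ltnW zn) // /u opprK addrC lerBlDr lerDl.
Qed.

End EulerProduct.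

Lemma f_natz n : f n%:Z = (f_nat n)%:Z.
Proof. by rewrite /f /f_nat PoszD -[(n ^ 4)%:Z]natz natrX (natz n). Qed.

Section DensityEstimate.
Variable R : realType.

Lemma inS2_sqdiv_count N p : prime p -> (0 < sqdiv_count N p)%N -> inS2 (N%:R : R) p.
Proof.
move=> p_pr /sqdiv_count_gt0 [d dN pd]; rewrite /inS2 p_pr /Rf.
have Rf_d : Rf_at (p ^ 2) d by rewrite /Rf_at f_natz dvdzE pd.
case: pselect => [ex | []]; last by exists d.
by case: ex_minnP => m _ m_min; rewrite ler_nat (leq_trans (m_min d Rf_d)).
Qed.

Lemma S2cardE N : (S2card (N%:R : R) = \sum_(0 <= p < N ^ 4 + 3) inS2 (N%:R : R) p)%N.
Proof.
rewrite /S2card natrK -sum1_card big_mkcond /= big_mkord.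
by apply: eq_bigr => p _; rewrite inE; case: inS2.
Qed.

Lemma sqdiv_count_le_S2 N p : prime p ->
  (sqdiv_count N p)%:R <= 8 * N%:R / (p ^ 2)%:R + 4 * (inS2 (N%:R : R) p : nat)%:R :> R.
Proof.
move=> p_pr; have p2_gt0 : (0 < p ^ 2)%N by rewrite expn_gt0 prime_gt0.
have cnt := sqdiv_count_le N p p_pr.
have rhs0 : 0 <= 8 * N%:R / (p ^ 2)%:R :> R by rewrite divr_ge0 ?mulr_ge0 ?ler0n.
have [p2N | Np2] := leqP (p ^ 2) N.
  apply: le_trans (_ : 8 * N%:R / (p ^ 2)%:R <= _); last by rewrite lerDl mulr_ge0 ?ler0n.
  rewrite ler_pdivlMr ?ltr0n // -!natrM ler_nat.
  apply: leq_trans (leq_mul cnt (leqnn (p ^ 2))) _.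
  by rewrite mulnAC mulSn; move: (leq_divM N (p ^ 2)); set t := (N %/ _ * _)%N; lia.
rewrite divn_small // mul1n in cnt.
have [-> | cnt_gt0] := posnP (sqdiv_count N p); first by rewrite addr_ge0 ?mulr_ge0 ?ler0n.
rewrite inS2_sqdiv_count //= mulr1n mulr1.
apply: (le_trans (_ : _ <= 4)); first by rewrite ler_nat.
by rewrite lerDr.
Qed.

Lemma sum_sqdiv_count_le z N : (0 < z)%N ->
  (\sum_(z <= p < N ^ 4 + 3 | prime p) sqdiv_count N p)%:R
    <= 16 * N%:R / z%:R + 4 * (S2card (N%:R : R))%:R :> R.
Proof.
move=> z0; rewrite natr_sum.
apply: le_trans (ler_sum _ (fun p => @sqdiv_count_le_S2 N p)) _.
rewrite big_split /= lerD //.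
  apply: le_trans (_ : \sum_(z <= p < N ^ 4 + 3) 8 * N%:R * (1 / (p ^ 2)%:R) <= _).
    rewrite big_mkcond; apply: ler_sum => p _.
    by case: ifP => _; rewrite ?mulrA ?mulr1 // mulr_ge0 ?divr_ge0 ?mulr_ge0 ?ler0n.
  have -> : 16 * N%:R / z%:R = 8 * N%:R * (2 / z%:R) :> R by ring.
  by rewrite -mulr_sumr ler_wpM2l ?mulr_ge0 ?ler0n // sum_inv_sq_le.
rewrite -mulr_sumr ler_wpM2l ?ler0n // S2cardE natr_sum.
have S2_ge0 m n : 0 <= \sum_(m <= p < n) (inS2 (N%:R : R) p : nat)%:R :> R.
  by apply: sumr_ge0 => p _; exact: ler0n.
have [zB | Bz] := leqP z (N ^ 4 + 3); last by rewrite [X in X <= _]big_geq ?(ltnW Bz).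
rewrite (big_cat_nat (leq0n z) zB) /= ler_wpDl // big_mkcond ler_sum // => p _.
by case: ifP => // _; exact: ler0n.
Qed.

Lemma sqfree_below_density z N : (0 < N)%N ->
  `|(sqfree_below_count z N)%:R / N%:R - euler_prod R z| <= (sqfree_residues z)%:R / N%:R.
Proof.
move=> N_gt0; rewrite -residues_over_primorial.
have /andP [lo hi] := sqfree_below_count_bounds z N.
set M := sq_primorial z in lo hi *; set Q := sqfree_residues z in lo hi *.
set G := sqfree_below_count z N in lo hi *; set q := (N %/ M)%N in lo hi *.
have M_gt0 : (0 < M)%N := sq_primorial_gt0 z.
have M0 : 0 < M%:R :> R by rewrite ltr0n.
have N0 : 0 < N%:R :> R by rewrite ltr0n.
have Q0 : 0 <= Q%:R :> R := ler0n _ _.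
have qM : q%:R * M%:R <= N%:R :> R by rewrite -natrM ler_nat leq_divM.
have Mq : N%:R <= (q%:R + 1) * M%:R :> R.
  by rewrite natr1 -natrM ler_nat ltnW // ltn_ceil.
move: lo hi; rewrite -!(ler_nat R) !natrM -natr1 => lo hi.
have -> : G%:R / N%:R - Q%:R / M%:R = (G%:R * M%:R - N%:R * Q%:R) / (N%:R * M%:R) :> R.
  by field; rewrite !gt_eqF.
rewrite normrM normfV (gtr0_norm (mulr_gt0 N0 M0)) ler_pdivrMr ?mulr_gt0 //.
have -> : Q%:R / N%:R * (N%:R * M%:R) = M%:R * Q%:R :> R by field; rewrite gt_eqF.
by rewrite ler_norml; apply/andP; split; nra.
Qed.

Lemma sqfree_below_gap z N : (0 < z)%N -> (0 < N)%N ->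
  0 <= ((sqfree_below_count z N)%:R / N%:R - (sqfree_count N)%:R / N%:R : R)
    <= 16 / z%:R + 4 * ((S2card (N%:R : R))%:R / N%:R).
Proof.
move=> z_gt0 N_gt0; have N0 : 0 < N%:R :> R by rewrite ltr0n.
rewrite -mulrBl; apply/andP; split.
  by rewrite divr_ge0 ?ler0n // subr_ge0 ler_nat sqfree_count_le_below.
have -> : 16 / z%:R + 4 * ((S2card (N%:R : R))%:R / N%:R) =
    (16 * N%:R / z%:R + 4 * (S2card (N%:R : R))%:R) / N%:R :> R.
  by field; rewrite !gt_eqF ?ltr0n.
rewrite ler_pM2r ?invr_gt0 //.
have large_primes := sum_sqdiv_count_le z N z_gt0.
have := sqfree_below_count_le z N; rewrite -(ler_nat R) natrD.
lra.
Qed.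

Lemma sqfree_density_error z N : (0 < z)%N -> (0 < N)%N ->
  `|(sqfree_count N)%:R / N%:R - euler_prod R z| <=
  (sqfree_residues z)%:R / N%:R + 16 / z%:R + 4 * ((S2card (N%:R : R))%:R / N%:R).
Proof.
move=> z_gt0 N_gt0; have /andP [gap_ge0 gap_le] := sqfree_below_gap z N z_gt0 N_gt0.
move: (sqfree_below_density z N N_gt0); rewrite !ler_norml => /andP [lo hi].
by apply/andP; split; lra.
Qed.

End DensityEstimate.

Lemma cvg_div_natr {R : realType} (C : R) : C / n%:R @[n --> \oo] --> 0.
Proof.
rewrite -(mulr0 C); apply: cvgM; first exact: cvg_cst.
apply/gtr0_cvgV0; last exact: cvgr_idn.
by apply: filterS (nbhs_infty_gt 0) => n; rewrite ltr0n.
Qed.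

(* First choose z so that P z is close to c and e z is small, then N large for that z. *)
Lemma cvg_two_scale {R : realType} {a P Q e s : nat -> R} {c : R} {z0 : nat} :
  P @ \oo --> c -> e @ \oo --> 0 -> s @ \oo --> 0 ->
  (forall z N, (z0 <= z)%N -> (0 < N)%N ->
     `|a N - P z| <= Q z / N%:R + e z + s N) ->
  a @ \oo --> c.
Proof.
move=> /cvgrPdist_lt Pc /cvgr0Pnorm_lt e0 /cvgr0Pnorm_lt s0 err.
apply/cvgrPdist_lt => eps eps0; have eps4 : 0 < eps / 4 by rewrite divr_gt0.
have [z [z0z [cPz ez]]] :=
  filter_ex (filterI (nbhs_infty_ge z0) (filterI (Pc _ eps4) (e0 _ eps4))).
have /cvgr0Pnorm_lt QN := cvg_div_natr (Q z).
near=> N.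
have N_gt0 : (0 < N)%N by near: N; exact: nbhs_infty_gt.
have QN_lt : `|Q z / N%:R| < eps / 4 by near: N; exact: QN.
have sN : `|s N| < eps / 4 by near: N; exact: s0.
have err_zN := err z N z0z N_gt0.
have Q_le := ler_norm (Q z / N%:R).
have e_le := ler_norm (e z); have s_le := ler_norm (s N).
apply: le_lt_trans (ler_distD (P z) _ _) _; rewrite [`|P z - _|]distrC; lra.
Unshelve. all: end_near.
Qed.

Theorem theorem3 (R : realType) :
  ((S2card T)%:R / T : R) @[T --> +oo%R] --> (0 : R) ->
  exists c : R,
    [/\ (fun N : nat => (sqfree_count N)%:R / N%:R : R) @ \oo --> c,
        0 < c &
        (fun N : nat => \prod_(p < N | prime p)
            (1 - (delta (p ^ 2)%N)%:R / ((p ^ 2)%N)%:R : R)) @ \oo --> c].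
Proof.
move=> S2_small.
have euler_lb : has_lbound (range (euler_prod R)).
  by exists (1 / 6) => _ [z _ <-]; exact: euler_prod_ge.
have euler_cvg := nonincreasing_is_cvgn (euler_prod_nonincreasing R) euler_lb.
exists (limn (euler_prod R)); split.
- apply: (cvg_two_scale euler_cvg (cvg_div_natr 16) _ (sqfree_density_error R)).
  rewrite -(mulr0 4); apply: cvgM; first exact: cvg_cst.
  exact: (cvg_comp _ _ cvgr_idn S2_small).
- apply: lt_le_trans (_ : 0 < 1 / 6) _; first by rewrite divr_gt0.
  by apply: limr_ge euler_cvg _; apply: nearW; exact: euler_prod_ge.
- suff -> : (fun N : nat => \prod_(p < N | prime p)
      (1 - (delta (p ^ 2)%N)%:R / ((p ^ 2)%N)%:R : R)) = euler_prod R by [].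
  by apply: funext => N; rewrite /euler_prod big_mkord.
Qed.
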